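(* Let $T$ be a $(2n-1)$-universal tree. Let $T'$ be any binary rooted tree with $n$ leaves and no degree-1 nodes, and let $c:\mathsf{inner}(T')\to\{0,1\}$ be any assignment. Then there is an injective map $f$ from the nodes of $T'$ to the nodes of $T$ with the following properties: - $f(\mathsf{NCA}(u,v))=\mathsf{NCA}(f(u),f(v))$ for all $u,v$; - every inner node $v$ with $c(v)=0$ is mapped to a node of even depth; - every inner node $v$ with $c(v)=1$ is mapped to a node of odd depth. That is, $T$ is a parity-constrained minor-universal tree for binary trees with $n$ leaves and no degree-1 nodes.
   Context: Trees are rooted; depth is the distance from the root (the root has depth 0); degree is the number of children; $\mathsf{inner}(T')$ is the set of non-leaf nodes of $T'$. $\mathsf{NCA}$ denotes the nearest common ancestor. Cutting: select nodes $a,b$ with $a$ a child of $b$, and remove the subtree rooted at $a$ together with the edge $ab$. Contraction: select an internal node $b$ with parent $a$ and exactly one child $c$, and remove $b$. If $c$ is internal, the children of $c$ become children of $a$ and $c$ is removed. If $c$ is a leaf, it becomes a child of $a$. $T$ implements $T'$ if $T'$ can be obtained (up to isomorphism) from $T$ by a sequence of these operations. $T$ is $m$-universal if it implements every rooted tree with at most $m$ leaves and no degree-1 nodes. *)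

From mathcomp Require Import all_boot.
From Stdlib Require Import Permutation Relation_Operators.

Set Implicit Arguments.
Unset Strict Implicit.
Unset Printing Implicit Defensive.

(* Rooted (unordered) trees, represented as rose trees; the order of the
   children list is irrelevant up to the permutation operation below. *)
Inductive tree : Type := Node : list tree -> tree.

Definition leaf : tree := Node [::].

Fixpoint nleaves (t : tree) : nat :=
  let: Node cs := t in
  if cs is [::] then 1 else
  (fix sum (l : list tree) : nat :=
     match l with [::] => 0 | x :: l' => nleaves x + sum l' end) cs.

Fixpoint no_deg1 (t : tree) : bool :=
  let: Node cs := t in
  (size cs != 1) &&
  (fix all_nd (l : list tree) : bool :=
     match l with [::] => true | x :: l' => no_deg1 x && all_nd l' end) cs.

Fixpoint full_binary (t : tree) : bool :=
  let: Node cs := t in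
  ((size cs == 0) || (size cs == 2)) &&
  (fix all_b (l : list tree) : bool :=
     match l with [::] => true | x :: l' => full_binary x && all_b l' end) cs.

(* Elementary operations, performed at a node "a" (the parent in the paper's
   descriptions).  Cutting removes a child subtree; contraction removes a
   child b having exactly one child c (if c is internal, c is removed too and
   its children become children of a; if c is a leaf, c becomes a child of a);
   permuting children realises "up to isomorphism". *)
Inductive local_op : tree -> tree -> Prop :=
| op_cut (c1 : list tree) (x : tree) (c2 : list tree) :
    local_op (Node (c1 ++ x :: c2)) (Node (c1 ++ c2))
| op_contract_leaf (c1 c2 : list tree) :
    local_op (Node (c1 ++ Node [:: leaf] :: c2)) (Node (c1 ++ leaf :: c2))
| op_contract_inner (c1 : list tree) (d : tree) (ds c2 : list tree) :
    local_op (Node (c1 ++ Node [:: Node (d :: ds)] :: c2))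
             (Node (c1 ++ (d :: ds) ++ c2))
| op_perm (cs cs' : list tree) :
    Permutation cs cs' -> local_op (Node cs) (Node cs').

Inductive at_some_node (R : tree -> tree -> Prop) : tree -> tree -> Prop :=
| asn_here (t t' : tree) : R t t' -> at_some_node R t t'
| asn_down (c1 : list tree) (x x' : tree) (c2 : list tree) :
    at_some_node R x x' ->
    at_some_node R (Node (c1 ++ x :: c2)) (Node (c1 ++ x' :: c2)).

Definition implements (T T' : tree) : Prop :=
  clos_refl_trans tree (at_some_node local_op) T T'.

Definition universal (m : nat) (T : tree) : Prop :=
  forall T' : tree, no_deg1 T' -> nleaves T' <= m -> implements T T'.

(* Nodes are addressed by paths (sequences of child indices) from the root. *)
Fixpoint subtree_at (t : tree) (p : seq nat) : option tree :=
  match p with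
  | [::] => Some t
  | i :: p' => let: Node cs := t in
      match List.nth_error cs i with
      | Some x => subtree_at x p'
      | None => None
      end
  end.

Definition is_node (t : tree) (p : seq nat) : Prop := subtree_at t p <> None.

Definition is_inner (t : tree) (p : seq nat) : Prop :=
  exists (d : tree) (ds : list tree), subtree_at t p = Some (Node (d :: ds)).

Definition depth (p : seq nat) : nat := size p.

Fixpoint nca (p q : seq nat) : seq nat :=
  match p, q with
  | i :: p', j :: q' => if i == j then i :: nca p' q' else [::]
  | _, _ => [::]
  end.

From mathcomp Require Import all_boot zify.
From Stdlib Require Import Permutation.

(* Every implementation step yields a map from the nodes of the result into the
   nodes of the original tree that preserves ancestry and incomparability, and
   under which, for incomparable u and v, the point where the images of u and v
   branch apart has the same depth parity as nca u v: cutting and reordering move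
   no node to a new depth, and a contraction moves either a single leaf or a
   whole subtree up by two levels.

   Given T' and c, build a tree T'' without degree-1 nodes and with fewer than
   2n leaves, together with such a map from T' into T'' that puts the branch
   point of the two children of every inner node v at a depth of parity c v:
   wherever the parity is wrong, the two children are pushed one level down under
   a new node whose other child is a new leaf.  T implements T'', and composing
   gives a map G from T' into T with prescribed branch-point parities.  Sending an
   inner node of T' to the branch point of the images of its two children (and a
   leaf to its image) preserves nca, is injective, and has the required parities. *)

Set Implicit Arguments.
Unset Strict Implicit.
Unset Printing Implicit Defensive.

Lemma prefix_anti (T : eqType) (p q : seq T) : prefix p q -> prefix q p -> p = q.
Proof.
move=> /prefixP[r ->] /prefixP[s /(congr1 size)/eqP].
rewrite !size_cat -addnA -{1}[size p]addn0 eqn_add2l.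
by case: r => [|x r] //= _; rewrite cats0.
Qed.

Lemma nca_cat s p q : nca (s ++ p) (s ++ q) = s ++ nca p q.
Proof. by elim: s => //= i s ->; rewrite eqxx. Qed.

Lemma ncaxx p : nca p p = p.
Proof. by elim: p => //= i p ->; rewrite eqxx. Qed.

Lemma ncaC p q : nca p q = nca q p.
Proof.
elim: p q => [|i p IH] [|j q] //=.
by rewrite eq_sym; case: eqP => // ->; rewrite IH.
Qed.

Lemma prefix_nca a p q : prefix a (nca p q) = prefix a p && prefix a q.
Proof.
elim: a p q => [|k a IH] [|i p] [|j q]; rewrite ?prefix0s ?andbF //=.
case: eqP => [<-|/eqP ij]; first by rewrite prefix_cons IH; case: (k == i).
by case: (eqVneq k i) => [->|]; rewrite ?(negbTE ij) ?andbF.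
Qed.

Lemma prefix_ncal p q : prefix (nca p q) p.
Proof. by have := prefix_refl (nca p q); rewrite prefix_nca => /andP[]. Qed.

Lemma prefix_ncar p q : prefix (nca p q) q.
Proof. by rewrite ncaC prefix_ncal. Qed.

Lemma nca_idPl p q : reflect (nca p q = p) (prefix p q).
Proof.
apply: (iffP idP) => [/prefixP[r ->]|<-]; last exact: prefix_ncar.
by rewrite -{1}[p]cats0 nca_cat cats0.
Qed.

Lemma nca_fork w i j p q : i != j -> nca (w ++ i :: p) (w ++ j :: q) = w.
Proof. by move=> ij; rewrite nca_cat /= (negbTE ij) cats0. Qed.

Definition incomparable (p q : seq nat) := ~~ prefix p q && ~~ prefix q p.

Lemma incomparableC p q : incomparable p q = incomparable q p.
Proof. exact: andbC. Qed.

Lemma incomparable0s p : incomparable [::] p = false.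
Proof. by rewrite /incomparable prefix0s. Qed.

Lemma incomparables0 p : incomparable p [::] = false.
Proof. by rewrite incomparableC incomparable0s. Qed.

Lemma incomparable_cat2l s p q : incomparable (s ++ p) (s ++ q) = incomparable p q.
Proof. by rewrite /incomparable !prefix_catr // eqxx. Qed.

Lemma incomparable_fork w i j p q : i != j -> incomparable (w ++ i :: p) (w ++ j :: q).
Proof.
move=> ij; rewrite /incomparable !prefix_catr // eqxx !prefix_cons.
by rewrite (negbTE ij) eq_sym (negbTE ij).
Qed.

Lemma incomparable_split p q : incomparable p q ->
  exists w i j p' q', [/\ i != j, p = w ++ i :: p' & q = w ++ j :: q'].
Proof.
elim: p q => [|i p IH] [|j q]; rewrite /incomparable ?prefix0s ?andbF //.
case: (eqVneq i j) => [<-|ij]; last by exists [::], i, j, p, q.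
rewrite !prefix_cons eqxx => /IH[w [i' [j' [p' [q' [ij -> ->]]]]]].
by exists (i :: w), i', j', p', q'.
Qed.

Lemma incomparable_extend a b p q : incomparable a b -> prefix a p -> prefix b q ->
  incomparable p q /\ nca p q = nca a b.
Proof.
case/incomparable_split=> w [i [j [a' [b' [ij -> ->]]]]] /prefixP[r ->] /prefixP[s ->].
by rewrite -!catA !cat_cons !nca_fork // incomparable_fork.
Qed.

Lemma subtree_at_cat t p q :
  subtree_at t (p ++ q) = obind (subtree_at^~ q) (subtree_at t p).
Proof.
elim: p t => [|i p IH] [cs] //=.
by case: (List.nth_error cs i).
Qed.

Lemma is_node_prefix t p q : prefix p q -> is_node t q -> is_node t p.
Proof.
by case/prefixP=> r ->; rewrite /is_node subtree_at_cat; case: (subtree_at t p).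
Qed.

Lemma is_node_cons cs i q : is_node (Node cs) (i :: q) ->
  exists2 x, List.nth_error cs i = Some x & is_node x q.
Proof. by rewrite /is_node /=; case: (List.nth_error cs i) => // x; exists x. Qed.

Lemma nth_error_cat (T : Type) (c1 c2 : seq T) i :
  List.nth_error (c1 ++ c2) i =
  if i < size c1 then List.nth_error c1 i else List.nth_error c2 (i - size c1).
Proof. by elim: c1 i => [|x c1 IH] [|i] //=; rewrite IH. Qed.

(* The images of incomparable [u] and [v] branch apart at [nca (g u) (g v)],
   which need not be [g (nca u v)]; [pi] prescribes the parity of its depth. *)
Definition branch_embedding (t t' : tree) (g : seq nat -> seq nat)
    (pi : seq nat -> bool) :=
  [/\ forall u, is_node t' u -> is_node t (g u),
      forall u v, is_node t' u -> is_node t' v -> prefix u v -> prefix (g u) (g v) &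
      forall u v, is_node t' u -> is_node t' v -> incomparable u v ->
        incomparable (g u) (g v) /\ odd (size (nca (g u) (g v))) = pi (nca u v)].

Lemma branch_embedding_id t : branch_embedding t t id (odd \o size).
Proof. by split. Qed.

Lemma branch_embedding_comp t1 t2 t3 g1 g2 pi :
  branch_embedding t1 t2 g1 (odd \o size) -> branch_embedding t2 t3 g2 pi ->
  branch_embedding t1 t3 (g1 \o g2) pi.
Proof.
move=> [N1 P1 I1] [N2 P2 I2]; split => [u /N2/N1 //|u v Hu Hv uv|u v Hu Hv uv].
  by apply: P1; [exact: N2 | exact: N2 | exact: P2].
have [guv <-] := I2 u v Hu Hv uv.
exact: I1 (N2 _ Hu) (N2 _ Hv) guv.
Qed.

Lemma is_node_leaf u : is_node leaf u -> u = [::].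
Proof. by case: u => // -[|i] q /is_node_cons[]. Qed.

Lemma leaf_embedding pi : branch_embedding leaf leaf id pi.
Proof.
split=> // u v /is_node_leaf -> /is_node_leaf ->.
by rewrite /incomparable prefix_refl.
Qed.

Definition graft (pr : nat -> seq nat) (h : nat -> seq nat -> seq nat) p :=
  if p is i :: q then pr i ++ h i q else [::].

Lemma graft_embedding cs cs' pr h pic pi :
  (forall i x', List.nth_error cs' i = Some x' ->
     exists2 x, subtree_at (Node cs) (pr i) = Some x &
                branch_embedding x x' (h i) (pic i)) ->
  (forall i q, pi (i :: q) = odd (size (pr i)) (+) pic i q) ->
  (forall i j x' y', i != j ->
     List.nth_error cs' i = Some x' -> List.nth_error cs' j = Some y' ->
     incomparable (pr i) (pr j) /\ odd (size (nca (pr i) (pr j))) = pi [::]) ->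
  branch_embedding (Node cs) (Node cs') (graft pr h) pi.
Proof.
move=> Hch Hpi Hfork; split.
- case=> [|i q] //= /is_node_cons[x' E Hq].
  have [x Ex [N _ _]] := Hch i x' E.
  by rewrite /is_node subtree_at_cat Ex; apply: N.
- case=> [|i u] [|j v] //= Hu Hv; rewrite ?prefix0s // => /andP[/eqP ij uv].
  subst j; have [x' E Hu'] := is_node_cons Hu; move: Hv; rewrite /is_node /= E => Hv.
  have [x _ [_ P _]] := Hch i x' E.
  by rewrite prefix_catr // eqxx P.
- case=> [|i p] [|j q] Hp Hq; rewrite ?incomparable0s ?incomparables0 //.
  have [x' E Hp'] := is_node_cons Hp; have [y' E' Hq'] := is_node_cons Hq.
  case: (eqVneq i j) E' Hq' => [<-|ij] E' Hq'.
  + rewrite E in E'; case: E' => <- in Hq'.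
    rewrite -[i :: p]cat1s -[i :: q]cat1s incomparable_cat2l => pq.
    have [x _ [_ _ I]] := Hch i x' E; have [gpq e] := I p q Hp' Hq' pq.
    by rewrite /= nca_cat size_cat oddD incomparable_cat2l gpq eqxx Hpi e.
  + have [prij e] := Hfork i j x' y' ij E E' => _.
    have [-> ->] := incomparable_extend prij (prefix_prefix _ (h i p)) (prefix_prefix _ (h j q)).
    by rewrite /= (negbTE ij) e.
Qed.

Lemma subtree_at1 cs i : subtree_at (Node cs) [:: i] = List.nth_error cs i.
Proof. by rewrite /=; case: (List.nth_error cs i). Qed.

Lemma reindex_embedding cs cs' (s : nat -> nat) h : injective s ->
  (forall i x', List.nth_error cs' i = Some x' ->
     exists2 x, List.nth_error cs (s i) = Some x &
                branch_embedding x x' (h i) (odd \o size)) ->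
  branch_embedding (Node cs) (Node cs') (graft (fun i => [:: s i]) h) (odd \o size).
Proof.
move=> inj_s Hch; apply: (graft_embedding (pic := fun=> odd \o size)) => //.
- by move=> i x' /Hch[x Ex]; exists x; rewrite // subtree_at1.
- move=> i j x' y' ij _ _; rewrite /= (inj_eq inj_s) (negbTE ij); split=> //.
  by apply: (@incomparable_fork [::]); rewrite (inj_eq inj_s).
Qed.

Lemma cut_embedding c1 x c2 :
  exists g, branch_embedding (Node (c1 ++ x :: c2)) (Node (c1 ++ c2)) g (odd \o size).
Proof.
pose s i := if i < size c1 then i else i.+1.
have inj_s : injective s.
  by move=> i j; rewrite /s; case: (ltnP i (size c1)) => ?; case: (ltnP j (size c1)) => ? ?; lia.
exists (graft (fun i => [:: s i]) (fun=> id)); apply: reindex_embedding => // i x' E.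
exists x'; last exact: branch_embedding_id.
rewrite -E !nth_error_cat /s; case: (ltnP i (size c1)) => [->|le_c1_i] //.
by rewrite ltnNge leqW // subSn.
Qed.

Lemma replace_child_embedding c1 c2 x x' g :
  branch_embedding x x' g (odd \o size) ->
  exists g', branch_embedding (Node (c1 ++ x :: c2)) (Node (c1 ++ x' :: c2)) g' (odd \o size).
Proof.
move=> Hg; exists (graft (fun i => [:: i]) (fun i => if i == size c1 then g else id)).
apply: (reindex_embedding (s := id)) => // i y'; rewrite !nth_error_cat.
case: ltnP => [lt_i_c1|le_c1_i].
  by rewrite ltn_eqF // => E; exists y' => //; exact: branch_embedding_id.
case Ed: (i - size c1) => [|k] /=.
- have -> : i == size c1 by lia.
  by case=> <-; exists x.
- have -> : (i == size c1) = false by lia.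
  by move=> E; exists y' => //; exact: branch_embedding_id.
Qed.

Lemma unary_leaf_embedding :
  branch_embedding (Node [:: leaf]) leaf (fun=> [:: 0]) (odd \o size).
Proof.
split=> // u v /is_node_leaf -> /is_node_leaf ->.
by rewrite /incomparable prefix_refl.
Qed.

Lemma contract_inner_embedding c1 d ds c2 :
  exists g, branch_embedding (Node (c1 ++ Node [:: Node (d :: ds)] :: c2))
                             (Node (c1 ++ (d :: ds) ++ c2)) g (odd \o size).
Proof.
set k := size c1; set m := size (d :: ds).
(* The children of [d :: ds] sit two levels below their new position, so branch
   points among them keep their depth parity. *)
pose mid i := k <= i < k + m.
pose hd i := if i < k then i else if mid i then k else i - m + 1.
pose pr i := hd i :: (if mid i then [:: 0; i - k] else [::]).
exists (graft pr (fun=> id)).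
apply: (graft_embedding (pic := fun=> odd \o size)).
- move=> i x' E; exists x'; last exact: branch_embedding_id.
  move: E; rewrite !nth_error_cat -/k -/m /pr /hd /mid.
  case: (ltnP i k) => [lt_ik|le_ki] /=.
    by rewrite nth_error_cat -/k lt_ik; case: (List.nth_error c1 i).
  case: (ltnP i (k + m)) => [lt_ikm|le_kmi] /=.
    rewrite ifT; last by lia.
    by rewrite /= nth_error_cat -/k ltnn subnn /=; case: (List.nth_error _ _).
  rewrite ifF; last by lia.
  rewrite /= nth_error_cat -/k ifF; last by lia.
  have -> : i - m + 1 - k = (i - k - m).+1 by lia.
  by rewrite /= => ->.
- by move=> i q /=; rewrite /pr; case: (mid i).
- move=> i j x' y' ij _ _.
  have [e|ne] := eqVneq (hd i) (hd j); last first.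
    by rewrite /pr /= (negbTE ne); split=> //; exact: (@incomparable_fork [::]).
  have [mi mj] : mid i /\ mid j.
    move: e ij; rewrite /hd /mid.
    by case: (ltnP i k) => ?; case: (ltnP j k) => ?;
      case: (ltnP i (k + m)) => ?; case: (ltnP j (k + m)) => ? /=; lia.
  have pr_mid l : mid l -> pr l = [:: k; 0] ++ [:: l - k].
    by move=> ml; rewrite /pr /hd ml; case/andP: ml => kl _; rewrite ltnNge kl.
  have ij' : i - k != j - k.
    by case/andP: mi => ki _; case/andP: mj => kj _; rewrite -(eqn_add2r k) !subnK.
  by rewrite !pr_mid // nca_fork ?incomparable_fork.
Qed.

Lemma perm_embedding cs cs' : Permutation cs cs' ->
  exists g, branch_embedding (Node cs) (Node cs') g (odd \o size).
Proof.
case/Permutation_nth_error=> _ [s [inj_s Es]].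
exists (graft (fun i => [:: s i]) (fun=> id)); apply: reindex_embedding => // i x' E.
by exists x'; [rewrite -Es | exact: branch_embedding_id].
Qed.

Lemma local_op_embedding t t' : local_op t t' ->
  exists g, branch_embedding t t' g (odd \o size).
Proof.
case=> [c1 x c2|c1 c2|c1 d ds c2|cs cs' /perm_embedding //].
- exact: cut_embedding.
- exact: replace_child_embedding unary_leaf_embedding.
- exact: contract_inner_embedding.
Qed.

Lemma at_some_node_embedding (R : tree -> tree -> Prop) t t' :
  (forall s s', R s s' -> exists g, branch_embedding s s' g (odd \o size)) ->
  at_some_node R t t' -> exists g, branch_embedding t t' g (odd \o size).
Proof.
move=> HR; elim=> [s s' /HR //|c1 x x' c2 _ [g Hg]].
exact: replace_child_embedding Hg.
Qed.

Lemma implements_embedding t t' : implements t t' ->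
  exists g, branch_embedding t t' g (odd \o size).
Proof.
elim=> [s s'|s|s1 s2 s3 _ [g1 E1] _ [g2 E2]].
- exact/at_some_node_embedding/local_op_embedding.
- by exists id; exact: branch_embedding_id.
- by exists (g1 \o g2); exact: branch_embedding_comp E1 E2.
Qed.

Fixpoint tree_nested_ind (P : tree -> Prop)
    (IH : forall cs, (forall x, List.In x cs -> P x) -> P (Node cs)) (t : tree) : P t :=
  let: Node cs := t in
  IH cs ((fix all_in (l : list tree) : forall x, List.In x l -> P x :=
    match l with
    | [::] => fun x (inx : List.In x [::]) => False_ind _ inx
    | y :: l' => fun x (inx : List.In x (y :: l')) =>
        match inx with
        | or_introl e => eq_ind y P (tree_nested_ind IH y) x e
        | or_intror inx' => all_in l' x inx'
        end
    end) cs).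

Lemma parity_gadget t pi : full_binary t ->
  exists t'' h, [/\ no_deg1 t'', nleaves t'' < 2 * nleaves t & branch_embedding t'' t h pi].
Proof.
elim/tree_nested_ind: t pi => cs IH pi.
case: cs IH => [|a [|b [|? ?]]] IH //=.
  by move=> _; exists leaf, id; split=> //; exact: leaf_embedding.
case/andP=> fa /andP[fb _].
pose pic i q := ~~ pi [::] (+) pi (i :: q).
have [ta [ha [nda lta Ea]]] := IH a (or_introl erefl) (pic 0) fa.
have [tb [hb [ndb ltb Eb]]] := IH b (or_intror (or_introl erefl)) (pic 1) fb.
(* [top] is the new child of the root carrying both subtrees; it is inserted
   exactly when [pi [::]] asks for a branch point of odd depth. *)
pose top := if pi [::] then [:: 0] else [::].
exists (Node (if pi [::] then [:: Node [:: ta; tb]; leaf] else [:: ta; tb])).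
exists (graft (fun i => top ++ [:: i]) (fun i => if i == 0 then ha else hb)).
split; [by case: (pi [::]); rewrite /= nda ndb | by case: (pi [::]) => /=; lia |].
apply: (graft_embedding (pic := pic)).
- case=> [|[|i]] x' /=; last by case: i.
  + by case=> <-; exists ta => //; rewrite /top; case: (pi [::]).
  + by case=> <-; exists tb => //; rewrite /top; case: (pi [::]).
- by move=> i q; rewrite /pic size_cat addn1 /top; case: (pi [::]); case: (pi (i :: q)).
- case=> [|[|i]] [|[|j]] x' y' //= _; try by [case: i | case: j].
  all: by move=> _ _; rewrite nca_fork ?incomparable_fork //; rewrite /top; case: (pi [::]).
Qed.

Lemma full_binary_subtree t u s : full_binary t -> subtree_at t u = Some s -> full_binary s.
Proof.
elim: u t => [|i u IH] [cs] /=; first by move=> ? [<-].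
case: cs => [|a [|b [|? ?]]] //=; first by case: i.
case/andP=> fa /andP[fb _].
by case: i => [|[|i]] //=; [exact: IH | exact: IH | case: i].
Qed.

Lemma full_binary_parent t u i r : full_binary t -> is_node t (u ++ i :: r) ->
  exists a b, subtree_at t u = Some (Node [:: a; b]) /\ i < 2.
Proof.
move=> bin_t; rewrite /is_node subtree_at_cat.
case E: (subtree_at t u) => [[cs]|] //=.
have := full_binary_subtree bin_t E.
case: cs {E} => [|a [|b [|? ?]]] //= _.
  by rewrite List.nth_error_nil => /(_ erefl).
case: i => [|[|i]] /=; try by exists a, b.
by rewrite List.nth_error_nil => /(_ erefl).
Qed.

Section BranchPoints.

Variables (T T' : tree) (G : seq nat -> seq nat) (c : seq nat -> bool).
Hypotheses (binT' : full_binary T') (embG : branch_embedding T T' G c).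

Definition branch_point u :=
  if subtree_at T' u is Some (Node [:: _; _]) then nca (G (u ++ [:: 0])) (G (u ++ [:: 1]))
  else G u.

Lemma children_fork u a b i j : subtree_at T' u = Some (Node [:: a; b]) ->
  i < 2 -> j < 2 -> i != j ->
  [/\ incomparable (G (u ++ [:: i])) (G (u ++ [:: j])),
      nca (G (u ++ [:: i])) (G (u ++ [:: j])) = branch_point u &
      odd (size (branch_point u)) = c u].
Proof.
move=> E lti ltj ij; have [_ _ I] := embG.
have child k : k < 2 -> is_node T' (u ++ [:: k]).
  by rewrite /is_node subtree_at_cat E; case: k => [|[|]].
have [Iij] := I _ _ (child i lti) (child j ltj) (incomparable_fork u [::] [::] ij).
rewrite nca_fork // /branch_point E.
case: i j lti ltj ij Iij => [|[|i]] [|[|j]] //= _ _ _ Iij pij.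
by split=> //; rewrite ncaC.
Qed.

Lemma branch_point_node u : is_node T' u -> is_node T (branch_point u).
Proof.
have [N _ _] := embG; rewrite /branch_point => Hu.
case E: (subtree_at T' u) => [[[|a [|b [|? ?]]]]|]; try exact: N.
apply: is_node_prefix (prefix_ncal _ _) (N _ _).
by rewrite /is_node subtree_at_cat E.
Qed.

Lemma prefix_branch_point u : is_node T' u -> prefix (G u) (branch_point u).
Proof.
have [_ P _] := embG; rewrite /branch_point => Hu.
case E: (subtree_at T' u) => [[[|a [|b [|? ?]]]]|]; try exact: prefix_refl.
have child k : k < 2 -> prefix (G u) (G (u ++ [:: k])).
  move=> ltk; apply: P => //; last exact: prefix_prefix.
  by rewrite /is_node subtree_at_cat E; case: k ltk => [|[|]].
by rewrite prefix_nca !child.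
Qed.

Lemma prefix_child_branch_point u i r : is_node T' (u ++ i :: r) ->
  prefix (G (u ++ [:: i])) (branch_point (u ++ i :: r)).
Proof.
move=> Hv; have [_ P _] := embG.
have ui_v : prefix (u ++ [:: i]) (u ++ i :: r).
  by rewrite prefix_catr // eqxx prefix_cons eqxx prefix0s.
apply: prefix_trans (prefix_branch_point Hv).
by apply: P => //; exact: is_node_prefix Hv.
Qed.

Lemma branch_point_strict u v : is_node T' v -> prefix u v -> u != v ->
  prefix (branch_point u) (branch_point v) /\ branch_point u != branch_point v.
Proof.
move=> Hv /prefixP[[|i r] ev]; subst v; first by rewrite cats0 eqxx.
move=> _; have [a [b [E lti]]] := full_binary_parent binT' Hv.
have [j ltj ij] : exists2 j, j < 2 & i != j by exists (1 - i); lia.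
have [Iij <- _] := children_fork E lti ltj ij.
have x_below := prefix_child_branch_point Hv.
have nx : nca (G (u ++ [:: i])) (G (u ++ [:: j])) != G (u ++ [:: i]).
  by apply: contraTneq Iij => /nca_idPl xy; rewrite /incomparable xy.
split; first exact: prefix_trans (prefix_ncal _ _) x_below.
by apply: contra_neq nx => e; apply: prefix_anti (prefix_ncal _ _) _; rewrite e.
Qed.

Lemma branch_point_incomparable u v : is_node T' u -> is_node T' v -> incomparable u v ->
  incomparable (branch_point u) (branch_point v) /\
  nca (branch_point u) (branch_point v) = branch_point (nca u v).
Proof.
move=> Hu Hv /incomparable_split[w [i [j [p [q [ij eu ev]]]]]]; subst u v.
have [a [b [E lti]]] := full_binary_parent binT' Hu.
have [_ [_ [_ ltj]]] := full_binary_parent binT' Hv.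
have [Iij e _] := children_fork E lti ltj ij.
rewrite nca_fork // -e.
exact: incomparable_extend Iij (prefix_child_branch_point Hu) (prefix_child_branch_point Hv).
Qed.

Lemma branch_point_nca u v : is_node T' u -> is_node T' v ->
  branch_point (nca u v) = nca (branch_point u) (branch_point v).
Proof.
move=> Hu Hv; case: (eqVneq u v) => [<-|neq]; first by rewrite !ncaxx.
have [uv|nuv] := boolP (prefix u v).
  by have [/nca_idPl -> _] := branch_point_strict Hv uv neq; move/nca_idPl: uv => ->.
have [vu|nvu] := boolP (prefix v u).
  rewrite eq_sym in neq; rewrite ncaC [nca (branch_point u) _]ncaC.
  by have [/nca_idPl -> _] := branch_point_strict Hu vu neq; move/nca_idPl: vu => ->.
by have [_ ->] := branch_point_incomparable Hu Hv (introT andP (conj nuv nvu)).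
Qed.

Lemma branch_point_inj u v : is_node T' u -> is_node T' v ->
  branch_point u = branch_point v -> u = v.
Proof.
move=> Hu Hv e; case: (eqVneq u v) => // neq; exfalso.
have [uv|nuv] := boolP (prefix u v).
  by have [_] := branch_point_strict Hv uv neq; rewrite e eqxx.
have [vu|nvu] := boolP (prefix v u).
  by rewrite eq_sym in neq; have [_] := branch_point_strict Hu vu neq; rewrite e eqxx.
have [] := branch_point_incomparable Hu Hv (introT andP (conj nuv nvu)).
by rewrite e /incomparable prefix_refl.
Qed.

Lemma branch_point_parity v : is_inner T' v -> odd (size (branch_point v)) = c v.
Proof.
case=> d [ds E]; have := full_binary_subtree binT' E.
case: ds E => [|b [|? ?]] E //= _.
by have [] := children_fork (i := 0) (j := 1) E.
Qed.

End BranchPoints.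

Theorem lemma15 (n : nat) (T : tree) :
  universal (2 * n - 1) T ->
  forall T' : tree, full_binary T' -> nleaves T' = n ->
  forall c : seq nat -> bool,
  exists f : seq nat -> seq nat,
    (forall u, is_node T' u -> is_node T (f u)) /\
    (forall u v, is_node T' u -> is_node T' v -> f u = f v -> u = v) /\
    (forall u v, is_node T' u -> is_node T' v -> f (nca u v) = nca (f u) (f v)) /\
    (forall v, is_inner T' v -> c v = false -> ~~ odd (depth (f v))) /\
    (forall v, is_inner T' v -> c v = true -> odd (depth (f v))).
Proof.
move=> univT T' binT' nT' c; subst n.
have [T'' [h [nd lt_leaves embh]]] := parity_gadget c binT'.
have [g embg] : exists g, branch_embedding T T'' g (odd \o size).
  by apply/implements_embedding/univT => //; lia.
have embG := branch_embedding_comp embg embh.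
exists (branch_point T' (g \o h)); split; [|split; [|split; [|split]]].
- exact: branch_point_node embG.
- exact: branch_point_inj binT' embG.
- exact: branch_point_nca binT' embG.
- by move=> v /(branch_point_parity binT' embG); rewrite /depth => -> ->.
- by move=> v /(branch_point_parity binT' embG); rewrite /depth => -> ->.
Qed.
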